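(* For every round $t$ and every node $s\in S$, the GLR statistic $Z_s(t)=\inf_{\bm{\lambda}\in\mathrm{Alt}_s(\hat{\bm{\mu}}(t))}\sum_{\ell\in\mathcal{D}(s)}N_\ell(t)\,d(\hat\mu_\ell(t),\lambda_\ell)$ satisfies the following recursion. If $a_{s_0}(\hat{\bm{\mu}}(t))=$'win': for a leaf $s$, $Z_s(t)=N_s(t)d(\hat\mu_s(t),\theta)$ if $\hat\mu_s(t)\ge\theta$ and $Z_s(t)=0$ otherwise; $Z_s(t)=\sum_{c\in\mathcal{C}(s)}Z_c(t)$ if $L(s)=$MAX; $Z_s(t)=\min_{c\in\mathcal{C}(s)}Z_c(t)$ if $L(s)=$MIN. If $a_{s_0}(\hat{\bm{\mu}}(t))=$'lose': for a leaf $s$, $Z_s(t)=N_s(t)d(\hat\mu_s(t),\theta)$ if $\hat\mu_s(t)<\theta$ and $Z_s(t)=0$ otherwise; $Z_s(t)=\sum_{c\in\mathcal{C}(s)}Z_c(t)$ if $L(s)=$MIN; $Z_s(t)=\min_{c\in\mathcal{C}(s)}Z_c(t)$ if $L(s)=$MAX.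
   Context: $\mathcal{T}$ is a finite rooted tree with node set $S$, root $s_0$, children sets $\mathcal{C}(s)$, leaf set $\mathcal{L}(\mathcal{T})$, and $\mathcal{D}(s)$ the set of leaves descending from $s$ ($\{s\}$ for a leaf). Internal nodes have labels $L(s)\in\{\text{MAX},\text{MIN}\}$. $X\subseteq\mathbb{R}$ is the mean-parameter set of a one-parameter exponential family, $d(x,y)$ the KL divergence between members with means $x$ and $y$, $\theta\in X$ a threshold. For $\bm{\lambda}$: $V_s(\bm{\lambda})=\lambda_s$ at a leaf, max (resp. min) of children's values at MAX (resp. MIN) nodes; $a_s(\bm{\lambda})=$'win' iff $V_s(\bm{\lambda})\ge\theta$, else 'lose'. At each round a leaf is sampled and a reward observed; $N_\ell(t)$ is the number of samples of leaf $\ell$ up to round $t$ and $\hat\mu_\ell(t)\in X$ its empirical mean; $\hat{\bm{\mu}}(t)=(\hat\mu_\ell(t))_\ell$. $\mathrm{Alt}_s(\hat{\bm{\mu}}(t))=\{\bm{\lambda}\in X^{\mathcal{D}(s)}:a_s(\bm{\lambda})\neq a_{s_0}(\hat{\bm{\mu}}(t))\}$. *)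

From HB Require Import structures.
From mathcomp Require Import all_boot all_order all_algebra.
From mathcomp Require Import all_classical all_reals all_analysis.
Set Implicit Arguments. Unset Strict Implicit. Unset Printing Implicit Defensive.
Import Order.TTheory GRing.Theory Num.Theory numFieldNormedType.Exports.
Local Open Scope classical_set_scope.
Local Open Scope ring_scope.

Inductive label := MAX | MIN.

Inductive tree :=
| Leaf of nat
| Node of label & seq tree.

Fixpoint leaves (t : tree) : seq nat :=
  match t with
  | Leaf l => [:: l]
  | Node _ cs => flatten (map leaves cs)
  end.

(* Prop-level list membership (tree has no eqType) *)
Fixpoint In (A : Type) (a : A) (s : seq A) : Prop :=
  match s with [::] => False | b :: s' => b = a \/ In a s' end.

Inductive is_node (t0 : tree) : tree -> Prop :=
| is_root : is_node t0 t0
| is_child (lb : label) (cs : seq tree) (c : tree) :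
    is_node t0 (Node lb cs) -> In c cs -> is_node t0 c.

Definition wf_tree (t0 : tree) : Prop :=
  uniq (leaves t0) /\ (forall lb cs, is_node t0 (Node lb cs) -> cs <> [::]).

Section Values.
Variable R : realType.

Definition maxseq (s : seq R) : R :=
  match s with [::] => 0 | x :: s' => foldr Num.max x s' end.
Definition minseq (s : seq R) : R :=
  match s with [::] => 0 | x :: s' => foldr Num.min x s' end.

Fixpoint tval (lam : nat -> R) (t : tree) : R :=
  match t with
  | Leaf l => lam l
  | Node MAX cs => maxseq (map (tval lam) cs)
  | Node MIN cs => minseq (map (tval lam) cs)
  end.

(* a_s(lambda) = 'win' (true) iff V_s(lambda) >= theta, else 'lose' (false) *)
Definition answer (theta : R) (lam : nat -> R) (t : tree) : bool :=
  theta <= tval lam t.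

(* Given by its natural-parameter space I (a nonempty open interval) and its
   log-partition function b, differentiable on I with derivative db strictly
   increasing and continuous on I (b strictly convex).  The mean of the member
   with natural parameter eta is db eta; the mean-parameter set is
   X = db @` I, and the KL divergence between the members with means x, y is
   the Bregman divergence  b(eta y) - b(eta x) - x (eta y - eta x). *)
Record expfam := ExpFam {
  ef_I : set R;
  ef_b : R -> R;
  ef_db : R -> R;
  ef_I_neq0 : ef_I !=set0;
  ef_I_open : open ef_I;
  ef_I_interval : is_interval ef_I;
  ef_derive : forall eta, ef_I eta -> is_derive eta 1 ef_b (ef_db eta);
  ef_db_incr : forall x y, ef_I x -> ef_I y -> x < y -> ef_db x < ef_db y;
  ef_db_cont : {within ef_I, continuous ef_db}
}.

Variable F : expfam.

Definition meanset : set R := ef_db F @` ef_I F.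

Definition natpar (x : R) : R := xget 0 [set e | ef_I F e /\ ef_db F e = x].

Definition kl (x y : R) : R :=
  ef_b F (natpar y) - ef_b F (natpar x) - x * (natpar y - natpar x).

Definition glr (theta : R) (t0 : tree) (N : nat -> nat) (mu : nat -> R)
    (s : tree) : R :=
  inf [set z | exists lam : nat -> R,
         (forall l, l \in leaves s -> meanset (lam l)) /\
         answer theta lam s != answer theta mu t0 /\
         z = \sum_(l <- leaves s) (N l)%:R * kl (mu l) (lam l)].

End Values.

From Pilot Require Import Defs.
From HB Require Import structures.
From mathcomp Require Import all_boot all_order all_algebra.
From mathcomp Require Import all_classical all_reals all_analysis.
From mathcomp Require Import ring lra.
Import Order.TTheory GRing.Theory Num.Theory numFieldNormedType.Exports.
Local Open Scope classical_set_scope.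
Local Open Scope ring_scope.
Set Implicit Arguments.
Unset Strict Implicit.
Unset Printing Implicit Defensive.

(* At a node, the constraint a_s(lambda) <> a_s0(mu) bears on the children's
   values through a max or a min.  When the node's player is the one favoured
   by the root's answer (MAX under 'win', MIN under 'lose'), every child has to
   change its answer; the children's leaf sets are disjoint, so the infimum
   splits into the sum of the children's infima.  Otherwise one child changing
   its answer suffices, and keeping lambda = mu on the other leaves costs
   nothing, so the infimum is the least of the children's.  At a leaf, the
   infimum of N d(mu, lambda) over lambda on the other side of theta is 0 if mu
   already lies there, and N d(mu, theta) otherwise: d(mu, .) is monotone away
   from mu by the three-point identity of Bregman divergences, and continuous
   at theta, which is needed when theta itself is excluded. *)

(* [tree] is a nested inductive type: the generated [tree_ind] gives no
   induction hypothesis for the children. *)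
Definition tree_ind_In (P : tree -> Prop) (P_Leaf : forall l, P (Leaf l))
    (P_Node : forall lb cs, (forall c, In c cs -> P c) -> P (Node lb cs)) :
  forall t, P t :=
  fix f t := match t return P t with
  | Leaf l => P_Leaf l
  | Node lb cs => P_Node lb cs ((fix g cs : forall c, In c cs -> P c :=
       match cs return forall c, In c cs -> P c with
       | [::] => fun c no_c => False_ind _ no_c
       | c0 :: cs' => fun c H => match H with
                                 | or_introl e => eq_ind c0 P (f c0) c e
                                 | or_intror H' => g cs' c H' end
       end) cs)
  end.

Section SeqIn.
Variable A : Type.
Implicit Types (c : A) (cs : seq A).

Lemma eq_map_In (B : Type) (f g : A -> B) cs :
  (forall c, In c cs -> f c = g c) -> map f cs = map g cs.
Proof.
elim: cs => //= c cs IH fg; rewrite fg; last by left.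
by rewrite IH // => c' c'_cs; apply: fg; right.
Qed.

Lemma allP_In (p : pred A) cs : reflect (forall c, In c cs -> p c) (all p cs).
Proof.
elim: cs => [|c cs IH] /=; first by left.
apply: (iffP andP) => [[pc /IH p_cs] c' [<-|/p_cs] // | p_cs].
by split; [apply: p_cs; left | apply/IH => c' c'_cs; apply: p_cs; right].
Qed.

Lemma hasP_In (p : pred A) cs : reflect (exists2 c, In c cs & p c) (has p cs).
Proof.
elim: cs => [|c cs IH] /=; first by right; case.
apply: (iffP orP) => [[pc | /IH[c' c'_cs pc']] | [c' [<-|c'_cs] pc']].
- by exists c; first left.
- by exists c'; first right.
- by left.
- by right; apply/IH; exists c'.
Qed.

Lemma In_map (B : eqType) (f : A -> B) c cs : In c cs -> f c \in map f cs.
Proof.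
by move=> c_cs; rewrite -has_pred1 has_map; apply/hasP_In; exists c => /=.
Qed.

Lemma mapP_In (B : eqType) (f : A -> B) y cs :
  y \in map f cs -> exists2 c, In c cs & y = f c.
Proof. by rewrite -has_pred1 has_map => /hasP_In[c c_cs /eqP <-]; exists c. Qed.

Lemma ler_sum_In (R : numDomainType) (f g : A -> R) cs :
  (forall c, In c cs -> f c <= g c) -> \sum_(c <- cs) f c <= \sum_(c <- cs) g c.
Proof.
elim: cs => [|c cs IH] fg; first by rewrite !big_nil.
rewrite !big_cons lerD //; first by apply: fg; left.
by apply: IH => c' c'_cs; apply: fg; right.
Qed.

Lemma ler_term_sum_In (R : numDomainType) (f : A -> R) cs c :
  (forall c', In c' cs -> 0 <= f c') -> In c cs -> f c <= \sum_(c' <- cs) f c'.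
Proof.
elim: cs => //= c0 cs IH f_ge0 c_cs.
have f_cs_ge0 c' : In c' cs -> 0 <= f c' by move=> ?; apply: f_ge0; right.
rewrite big_cons; case: c_cs => [<- | c_cs].
  by rewrite lerDl (le_trans _ (ler_sum_In f_cs_ge0)) // big1.
by rewrite -[f c]add0r lerD ?IH //; apply: f_ge0; left.
Qed.

End SeqIn.

Lemma mem_leaves_child cs c :
  In c cs -> {subset leaves c <= flatten (map leaves cs)}.
Proof.
by move=> c_cs l l_c; apply/flattenP; exists (leaves c); first exact: In_map.
Qed.

Lemma mem_leaves_children cs l :
  l \in flatten (map leaves cs) -> exists2 c, In c cs & l \in leaves c.
Proof. by case/flattenP => _ /mapP_In[c c_cs ->]; exists c. Qed.

Lemma uniq_leaves_child cs c :
  In c cs -> uniq (flatten (map leaves cs)) -> uniq (leaves c).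
Proof.
elim: cs => //= c0 cs IH [<-|c_cs]; rewrite cat_uniq => /and3P[// _ _].
exact: IH.
Qed.

Lemma sub_leaves_node t0 s : is_node t0 s -> {subset leaves s <= leaves t0}.
Proof. by elim=> // lb cs c _ sub c_cs l /(mem_leaves_child c_cs)/sub. Qed.

Lemma uniq_leaves_node t0 s : is_node t0 s -> uniq (leaves t0) -> uniq (leaves s).
Proof. by elim=> // lb cs c _ u c_cs /u; apply: uniq_leaves_child. Qed.

Section TreeValue.
Variable R : realType.
Implicit Types (lam : nat -> R) (x : R) (xs : seq R).

Lemma le_maxseq x xs : xs <> [::] -> (x <= maxseq xs) = has (fun y => x <= y) xs.
Proof.
case: xs => // y xs _ /=; elim: xs => /= [|z xs IH]; first by rewrite orbF.
by rewrite le_max IH orbCA.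
Qed.

Lemma le_minseq x xs : xs <> [::] -> (x <= minseq xs) = all (fun y => x <= y) xs.
Proof.
case: xs => // y xs _ /=; elim: xs => /= [|z xs IH]; first by rewrite andbT.
by rewrite le_min IH andbCA.
Qed.

Lemma minseq_le x xs : x \in xs -> minseq xs <= x.
Proof.
move=> x_xs; have xs_nil : xs <> [::] by case: xs x_xs.
by move: (le_minseq (minseq xs) xs_nil); rewrite lexx => /esym/allP; apply.
Qed.

Lemma minseq_in xs : xs <> [::] -> minseq xs \in xs.
Proof.
case: xs => // y xs _ /=; elim: xs => /= [|z xs]; first by rewrite inE.
rewrite !inE /Num.min; case: ifP => _; first by rewrite eqxx orbT.
by case/orP=> ->; rewrite ?orbT.
Qed.

Lemma eq_tval lam lam' s :
  {in leaves s, lam =1 lam'} -> Defs.tval lam s = Defs.tval lam' s.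
Proof.
elim/tree_ind_In: s => [l /= eq_lam | lb cs IH eq_lam]; first by rewrite eq_lam ?inE.
have eq_cs : map (Defs.tval lam) cs = map (Defs.tval lam') cs.
  apply: eq_map_In => c c_cs; apply: IH => // l /(mem_leaves_child c_cs).
  exact: eq_lam.
by case: lb {eq_lam} => /=; rewrite eq_cs.
Qed.

Lemma tval_cst t0 x s : wf_tree t0 -> is_node t0 s -> Defs.tval (fun=> x) s = x.
Proof.
move=> [_ cs_nil]; elim/tree_ind_In: s => // lb cs IH s_t0.
have -> : Defs.tval (fun=> x) (Node lb cs) =
          (if lb is MAX then @maxseq R else @minseq R) (map (fun=> x) cs).
  rewrite -(@eq_map_In _ _ (Defs.tval (fun=> x))) => [|c c_cs].
    by case: lb {s_t0}.
  exact/IH/(is_child s_t0).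
move: (cs_nil _ _ s_t0); case: cs {IH s_t0} => // c cs _.
by case: lb => /=; elim: cs => //= _ cs ->; rewrite ?maxxx ?minxx.
Qed.

Lemma answer_Node th lam lb cs : cs <> [::] ->
  answer th lam (Node lb cs) = (if lb is MAX then has else all) (answer th lam) cs.
Proof.
move=> cs_nil; have tcs_nil : map (Defs.tval lam) cs <> [::] by case: cs cs_nil.
rewrite /answer; case: lb => /=.
  by rewrite le_maxseq // has_map.
by rewrite le_minseq // all_map.
Qed.

Lemma answer_Node_neq th lam lb cs a : cs <> [::] ->
  (answer th lam (Node lb cs) != a) =
  (if (if lb is MAX then a else ~~ a) then all else has)
    (fun c => answer th lam c != a) cs.
Proof.
move=> /(answer_Node th lam lb) ->.
by case: lb; case: a; elim: cs => //= c cs <-; case: (answer th lam c).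
Qed.

End TreeValue.

Section ExponentialFamily.
Variables (R : realType) (F : expfam R).
Local Notation I := (ef_I F).
Local Notation b := (ef_b F).
Local Notation db := (ef_db F).
Local Notation X := (meanset F).
Local Notation eta := (natpar F).

Lemma natparP x : X x -> I (eta x) /\ db (eta x) = x.
Proof.
by case=> e Ie <-; apply: (@xgetI _ 0 [set e' | I e' /\ db e' = db e] e).
Qed.

Lemma natpar_db e : I e -> eta (db e) = e.
Proof.
move=> Ie; have [Ie' db_e'] := natparP (ex_intro2 _ _ e Ie erefl).
case: (ltgtP (eta (db e)) e) => // [/(ef_db_incr Ie' Ie) | /(ef_db_incr Ie Ie')];
  by rewrite db_e' ltxx.
Qed.

Lemma natpar_le x y : X x -> X y -> x <= y -> eta x <= eta y.
Proof.
move=> /natparP[Ix db_x] /natparP[Iy db_y] le_xy; rewrite leNgt.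
by apply/negP => /(ef_db_incr Iy Ix); rewrite db_x db_y ltNge le_xy.
Qed.

Lemma b_MVT e1 e2 : I e1 -> I e2 -> e1 < e2 ->
  exists c, [/\ I c, e1 < c < e2 & b e2 - b e1 = db c * (e2 - e1)].
Proof.
move=> I1 I2 lt12.
have I_itv z : z \in `[e1, e2] -> I z.
  by rewrite in_itv /=; apply: (ef_I_interval I1 I2).
have b_derive z : z \in `]e1, e2[ -> is_derive z 1 b (db z).
  by move=> z_itv; apply/ef_derive/I_itv; apply: subset_itv_oo_cc.
have b_cont : {within `[e1, e2], continuous b}.
  apply: derivable_within_continuous => z /I_itv/ef_derive b_z.
  exact: ex_derive.
have [c c_itv ->] := MVT lt12 b_derive b_cont.
by exists c; split; [apply/I_itv/subset_itv_oo_cc | rewrite in_itv in c_itv |].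
Qed.

Lemma bregman_ge0 e1 e2 : I e1 -> I e2 -> 0 <= b e2 - b e1 - db e1 * (e2 - e1).
Proof.
move=> I1 I2; case: (ltgtP e1 e2) => [lt12 | lt21 | <-].
- have [c [Ic /andP[lt1c _] ->]] := b_MVT I1 I2 lt12.
  have := ef_db_incr I1 Ic lt1c; nra.
- have [c [Ic /andP[_ ltc1] b_diff]] := b_MVT I2 I1 lt21.
  have := ef_db_incr Ic I1 ltc1; nra.
- by rewrite !subrr mulr0 subrr.
Qed.

Lemma kl_ge0 x y : X x -> X y -> 0 <= kl F x y.
Proof.
move=> /natparP[Ix db_x] /natparP[Iy _].
by rewrite /kl -{2}db_x; apply: bregman_ge0.
Qed.

Lemma klxx x : kl F x x = 0.
Proof. by rewrite /kl !subrr mulr0 subrr. Qed.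

Lemma klB x y z : kl F x y - kl F x z = kl F z y + (z - x) * (eta y - eta z).
Proof. rewrite /kl; ring. Qed.

Lemma kl_le_right m th l : X m -> X th -> X l -> m <= th -> th <= l ->
  kl F m th <= kl F m l.
Proof.
move=> Xm Xth Xl le_m le_l; rewrite -subr_ge0 klB addr_ge0 ?kl_ge0 //.
by rewrite mulr_ge0 ?subr_ge0 ?natpar_le.
Qed.

Lemma kl_le_left m th l : X m -> X th -> X l -> l <= th -> th <= m ->
  kl F m th <= kl F m l.
Proof.
move=> Xm Xth Xl le_l le_m; rewrite -subr_ge0 klB addr_ge0 ?kl_ge0 //.
by rewrite mulr_le0 ?subr_le0 ?natpar_le.
Qed.

Lemma kl_db m e : I e -> kl F m (db e) = b e - m * e - (b (eta m) - m * eta m).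
Proof. by move=> Ie; rewrite /kl natpar_db //; ring. Qed.

Lemma kl_approx_below m th eps : X th -> 0 < eps ->
  exists l, [/\ X l, l < th & kl F m l < kl F m th + eps].
Proof.
move=> /natparP[Ith db_th] eps_gt0; set e := eta th in Ith db_th.
pose g := b - cst m \* id.
have g_cont : {for e, continuous g}.
  apply: continuousB; last first.
    by apply: continuousM; [apply: cst_continuous | apply: cvg_id].
  apply: differentiable_continuous; apply/derivable1_diffP.
  by have b_derive := ef_derive Ith; apply: ex_derive.
have I_nbhs : nbhs e I by apply: open_nbhs_nbhs; split => //; apply: ef_I_open.
have /cvgrPdist_lt/(_ eps eps_gt0) g_near := g_cont.
have [r r_gt0 ball_sub] := (nbhs_ballP e _).1 (filterI g_near I_nbhs).
have e'_ball : ball e r (e - r / 2).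
  rewrite -ball_normE /ball_ /= opprB addrC subrK ger0_norm ?divr_ge0 ?ltW //.
  by rewrite ltr_pdivrMr // ltr_pMr // ltr1n.
have [g_e' Ie'] := ball_sub _ e'_ball.
exists (db (e - r / 2)); split.
- by exists (e - r / 2).
- by rewrite -db_th; apply: ef_db_incr => //; rewrite ltrBlDr ltrDl divr_gt0.
- rewrite -db_th !kl_db // -ltrBlDl -opprB.
  apply: le_lt_trans g_e'; rewrite -normrN; apply: le_trans (ler_norm _).
  by rewrite /g !fctE /=; lra.
Qed.

End ExponentialFamily.

Section GLR.
Variables (R : realType) (F : expfam R) (th : R) (t0 : tree).
Variables (N : nat -> nat) (mu : nat -> R) (a0 : bool).
Hypotheses (wf : wf_tree t0) (Xth : meanset F th).
Hypothesis Xmu : forall l, l \in leaves t0 -> meanset F (mu l).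
Hypothesis mu_a0 : answer th mu t0 = a0.
Local Notation X := (meanset F).
Local Notation Z := (glr F th t0 N mu).
Implicit Types (lam : nat -> R) (s : tree) (ls : seq nat).

Definition cost ls lam := \sum_(l <- ls) (N l)%:R * kl F (mu l) (lam l).

Definition alt s lam :=
  (forall l, l \in leaves s -> X (lam l)) /\ answer th lam s != a0.

Definition patch ls lam lam' l := if l \in ls then lam l else lam' l.

Lemma glrE s : Z s = inf [set cost (leaves s) lam | lam in alt s].
Proof.
rewrite /glr mu_a0; congr inf; apply/seteqP; split=> z.
  by case=> lam [X_lam [lam_alt ->]]; exists lam.
by case=> lam [X_lam lam_alt] <-; exists lam.
Qed.

Lemma cost_ge0 s lam : is_node t0 s ->
  (forall l, l \in leaves s -> X (lam l)) -> 0 <= cost (leaves s) lam.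
Proof.
move=> s_t0 X_lam; rewrite /cost big_seq sumr_ge0 // => l l_s.
by rewrite mulr_ge0 // kl_ge0 //; [apply/Xmu/(sub_leaves_node s_t0) | apply: X_lam].
Qed.

Lemma has_lbound_cost s : is_node t0 s ->
  has_lbound [set cost (leaves s) lam | lam in alt s].
Proof. by move=> s_t0; exists 0 => _ [lam [X_lam _] <-]; apply: cost_ge0. Qed.

Lemma Z_le s lam : is_node t0 s -> alt s lam -> Z s <= cost (leaves s) lam.
Proof.
move=> s_t0 lam_alt; rewrite glrE.
by apply: ge_inf; [exact: has_lbound_cost | exists lam].
Qed.

Lemma exists_alt s : is_node t0 s -> exists lam, alt s lam.
Proof.
move=> s_t0; have [x Xx x_alt] : exists2 x, X x & (th <= x) != a0.
  case: a0; last by exists th; rewrite ?lexx.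
  have [x [Xx x_lt _]] := kl_approx_below th Xth ltr01.
  by exists x; rewrite // leNgt x_lt.
by exists (fun=> x); split=> //; rewrite /answer (tval_cst x wf s_t0).
Qed.

Lemma Z_approx s eps : is_node t0 s -> 0 < eps ->
  exists2 lam, alt s lam & cost (leaves s) lam < Z s + eps.
Proof.
move=> s_t0 eps_gt0; have [lam lam_alt] := exists_alt s_t0.
have cost_inf : has_inf [set cost (leaves s) lam | lam in alt s].
  by split; [exists (cost (leaves s) lam), lam | apply: has_lbound_cost].
have [_ [lam' lam'_alt <-]] := inf_adherent eps_gt0 cost_inf.
by exists lam' => //; rewrite glrE.
Qed.

Lemma Z_eq s v : is_node t0 s ->
  (forall lam, alt s lam -> v <= cost (leaves s) lam) ->
  (forall eps, 0 < eps -> exists2 lam, alt s lam & cost (leaves s) lam <= v + eps) ->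
  Z s = v.
Proof.
move=> s_t0 v_lb v_approx; apply/le_anti/andP; split.
  apply/ler_addgt0Pr => eps /v_approx[lam lam_alt le_v].
  exact: le_trans (Z_le s_t0 lam_alt) le_v.
rewrite glrE; apply: lb_le_inf => [|_ [lam lam_alt <-]]; last exact: v_lb.
by have [lam lam_alt _] := v_approx 1 ltr01; exists (cost (leaves s) lam), lam.
Qed.

Lemma alt_Leaf l lam : alt (Leaf l) lam <-> X (lam l) /\ (th <= lam l) != a0.
Proof.
split=> [[X_lam lam_alt] | [X_lam lam_alt]]; split=> //.
  by apply: X_lam; rewrite inE.
by move=> l'; rewrite inE => /eqP ->.
Qed.

Lemma cost_Leaf l lam : cost (leaves (Leaf l)) lam = (N l)%:R * kl F (mu l) (lam l).
Proof. exact: big_seq1. Qed.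

Lemma Z_Leaf_mu l : is_node t0 (Leaf l) -> (th <= mu l) != a0 -> Z (Leaf l) = 0.
Proof.
move=> l_t0 mu_alt; have Xmu_l : X (mu l).
  by apply/Xmu/(sub_leaves_node l_t0); rewrite inE.
apply: Z_eq => // [lam [X_lam _] | eps eps_gt0]; first exact: cost_ge0.
by exists mu; [apply/alt_Leaf | rewrite cost_Leaf klxx mulr0 add0r ltW].
Qed.

Lemma Z_Leaf_th l : is_node t0 (Leaf l) -> (th <= mu l) = a0 ->
  Z (Leaf l) = (N l)%:R * kl F (mu l) th.
Proof.
move=> l_t0 mu_a0l; have Xmu_l : X (mu l).
  by apply/Xmu/(sub_leaves_node l_t0); rewrite inE.
apply: Z_eq => // [lam /alt_Leaf[X_lam] | eps eps_gt0].
  rewrite -mu_a0l cost_Leaf => lam_alt; apply: ler_wpM2l => //.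
  case: (leP th (mu l)) lam_alt => [th_mu | mu_th]; case: leP => // lam_th _.
    by apply: kl_le_left => //; apply: ltW.
  by apply: kl_le_right => //; apply: ltW.
case: (leP th (mu l)) mu_a0l => _ a0E; last first.
  exists (fun=> th); last by rewrite cost_Leaf lerDl ltW.
  by apply/alt_Leaf; rewrite lexx -a0E.
(* [eps / (n + 1)] rather than [eps / n], which is junk when [N l = 0]. *)
set n := (N l)%:R; have n1_gt0 : 0 < n + 1 by rewrite ltr_wpDl.
have [x [Xx x_lt kl_x]] := kl_approx_below (mu l) Xth (divr_gt0 eps_gt0 n1_gt0).
exists (fun=> x); first by apply/alt_Leaf; rewrite leNgt x_lt -a0E.
rewrite cost_Leaf (le_trans (ler_wpM2l (ler0n _ _) (ltW kl_x))) // mulrDr lerD2l.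
by rewrite mulrA ler_pdivrMr //; nra.
Qed.

Lemma Z_Leaf l : is_node t0 (Leaf l) ->
  Z (Leaf l) = if (th <= mu l) == a0 then (N l)%:R * kl F (mu l) th else 0.
Proof. by move=> l_t0; case: eqP => [/(Z_Leaf_th l_t0) | /eqP/(Z_Leaf_mu l_t0)]. Qed.

Lemma eq_cost ls lam lam' : {in ls, lam =1 lam'} -> cost ls lam = cost ls lam'.
Proof. by move=> eq_lam; apply: eq_big_seq => l /eq_lam ->. Qed.

Lemma cost_cat ls ls' lam : cost (ls ++ ls') lam = cost ls lam + cost ls' lam.
Proof. exact: big_cat. Qed.

Lemma cost_children cs lam :
  cost (flatten (map leaves cs)) lam = \sum_(c <- cs) cost (leaves c) lam.
Proof. by rewrite /cost big_flatten big_map. Qed.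

Lemma eq_alt s lam lam' : {in leaves s, lam =1 lam'} -> alt s lam' -> alt s lam.
Proof.
move=> eq_lam [X_lam' lam'_alt]; split.
  by move=> l l_s; rewrite eq_lam //; apply: X_lam'.
by rewrite /answer (eq_tval eq_lam).
Qed.

Lemma cost_patch_mu ls ls' lam : uniq ls -> uniq ls' -> {subset ls' <= ls} ->
  cost ls (patch ls' lam mu) = cost ls' lam.
Proof.
move=> u u' sub; rewrite /cost (bigID (mem ls')) /=.
rewrite [X in _ + X]big1 => [|l /negbTE l_ls'].
  have ls_ls' : perm_eq [seq l <- ls | l \in ls'] ls'.
    apply: uniq_perm; rewrite ?filter_uniq // => l; rewrite mem_filter.
    by apply/andP/idP => [[]//|l_ls']; split => //; apply: sub.
  rewrite addr0 -big_filter (perm_big _ ls_ls').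
  by apply: eq_big_seq => l l_ls'; rewrite /patch l_ls'.
by rewrite /patch l_ls' klxx mulr0.
Qed.

Lemma alt_glue cs eps : (forall c, In c cs -> is_node t0 c) ->
  uniq (flatten (map leaves cs)) -> 0 < eps ->
  exists lam, (forall c, In c cs -> alt c lam) /\
    cost (flatten (map leaves cs)) lam <= \sum_(c <- cs) Z c + eps.
Proof.
elim: cs eps => [|c cs IH] eps cs_t0 /=.
  by exists mu; rewrite /cost !big_nil add0r ltW.
rewrite cat_uniq => /and3P[_ disj u_cs] eps_gt0.
have eps2_gt0 : 0 < eps / 2 by rewrite divr_gt0.
have [lam [lam_alt cost_lam]] :=
  IH _ (fun c' c'_cs => cs_t0 c' (or_intror c'_cs)) u_cs eps2_gt0.
have [lamc lamc_alt cost_lamc] := Z_approx (cs_t0 c (or_introl erefl)) eps2_gt0.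
have eq_c : {in leaves c, patch (leaves c) lamc lam =1 lamc}.
  by move=> l l_c; rewrite /patch l_c.
have eq_cs : {in flatten (map leaves cs), patch (leaves c) lamc lam =1 lam}.
  by move=> l l_cs; rewrite /patch (negbTE (hasPn disj l l_cs)).
exists (patch (leaves c) lamc lam); split.
  move=> c' [<- | c'_cs]; first exact: eq_alt eq_c lamc_alt.
  by apply: eq_alt (lam_alt c' c'_cs) => l /(mem_leaves_child c'_cs)/eq_cs.
rewrite cost_cat (eq_cost eq_c) (eq_cost eq_cs) big_cons; lra.
Qed.

Lemma Z_sum lb cs : is_node t0 (Node lb cs) ->
  (forall lam, (answer th lam (Node lb cs) != a0) =
               all (fun c => answer th lam c != a0) cs) ->
  Z (Node lb cs) = \sum_(c <- cs) Z c.
Proof.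
move=> s_t0 alt_all; have cs_t0 c : In c cs -> is_node t0 c := is_child s_t0.
apply: Z_eq => // [lam [X_lam] | eps eps_gt0].
  rewrite alt_all => /allP_In lam_alt; rewrite cost_children.
  apply: ler_sum_In => c c_cs; apply: Z_le (cs_t0 _ c_cs) _.
  by split; [move=> l /(mem_leaves_child c_cs)/X_lam | apply: lam_alt].
have [lam [lam_alt cost_lam]] :=
  alt_glue cs_t0 (uniq_leaves_node s_t0 wf.1) eps_gt0.
exists lam => //; split; last by rewrite alt_all; apply/allP_In => c /lam_alt[].
by move=> l /mem_leaves_children[c /lam_alt[X_lam _]]; apply: X_lam.
Qed.

Lemma Z_min lb cs : is_node t0 (Node lb cs) ->
  (forall lam, (answer th lam (Node lb cs) != a0) =
               has (fun c => answer th lam c != a0) cs) ->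
  Z (Node lb cs) = minseq (map Z cs).
Proof.
move=> s_t0 alt_has; have cs_t0 c : In c cs -> is_node t0 c := is_child s_t0.
apply: Z_eq => // [lam [X_lam] | eps eps_gt0].
  rewrite alt_has => /hasP_In[c c_cs c_alt].
  have X_lam_c l : l \in leaves c -> X (lam l) by move/(mem_leaves_child c_cs)/X_lam.
  apply: le_trans (minseq_le (In_map Z c_cs)) _.
  apply: le_trans (Z_le (cs_t0 _ c_cs) (conj X_lam_c c_alt)) _.
  rewrite cost_children; apply: ler_term_sum_In c_cs => c' c'_cs.
  by apply: cost_ge0 (cs_t0 _ c'_cs) _ => l /(mem_leaves_child c'_cs)/X_lam.
have Zcs_nil : map Z cs <> [::].
  by move=> /(congr1 size); rewrite size_map => /size0nil; apply: wf.2 s_t0.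
have /mapP_In[c c_cs ->] := minseq_in Zcs_nil.
have [lam [X_lam c_alt] cost_lam] := Z_approx (cs_t0 _ c_cs) eps_gt0.
have eq_c : {in leaves c, patch (leaves c) lam mu =1 lam}.
  by move=> l l_c; rewrite /patch l_c.
have u_s := uniq_leaves_node s_t0 wf.1.
exists (patch (leaves c) lam mu); first split.
- move=> l l_s; rewrite /patch; case: ifP => [/X_lam // | _].
  exact/Xmu/(sub_leaves_node s_t0).
- by rewrite alt_has; apply/hasP_In; exists c; rewrite // /answer (eq_tval eq_c).
rewrite cost_patch_mu ?ltW //; first exact: uniq_leaves_child c_cs u_s.
exact: mem_leaves_child c_cs.
Qed.

Lemma Z_Node lb cs : is_node t0 (Node lb cs) ->
  Z (Node lb cs) = if (if lb is MAX then a0 else ~~ a0)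
                   then \sum_(c <- cs) Z c else minseq (map Z cs).
Proof.
move=> s_t0; have alt_Node lam := answer_Node_neq th lam lb a0 (wf.2 _ _ s_t0).
by case: ifP alt_Node => _ alt_Node; [apply: Z_sum | apply: Z_min].
Qed.

End GLR.

Unset Implicit Arguments.

Theorem theorem3 (R : realType) (F : expfam R) (t0 : tree) (theta : R)
    (N : nat -> nat -> nat) (muhat : nat -> nat -> R) :
  wf_tree t0 ->
  meanset F theta ->
  (forall t l, l \in leaves t0 -> meanset F (muhat t l)) ->
  forall (t : nat) (s : tree), is_node t0 s ->
  let Z := glr F theta t0 (N t) (muhat t) in
  if answer theta (muhat t) t0 then
    match s with
    | Leaf l => Z s = (if theta <= muhat t l
                       then (N t l)%:R * kl F (muhat t l) theta else 0)
    | Node MAX cs => Z s = \sum_(c <- cs) Z c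
    | Node MIN cs => Z s = minseq (map Z cs)
    end
  else
    match s with
    | Leaf l => Z s = (if muhat t l < theta
                       then (N t l)%:R * kl F (muhat t l) theta else 0)
    | Node MIN cs => Z s = \sum_(c <- cs) Z c
    | Node MAX cs => Z s = minseq (map Z cs)
    end.
Proof.
move=> wf Xth Xmu t s s_t0 Z; have Xmu_t := Xmu t.
case: s s_t0 => [l | lb cs] s_t0; rewrite /Z.
  rewrite (Z_Leaf (N t) Xth Xmu_t erefl s_t0) ltNge.
  by case: (answer theta (muhat t) t0); rewrite ?eqb_id ?eqbF_neg.
rewrite (Z_Node (N t) wf Xth Xmu_t erefl s_t0).
by case: (answer theta (muhat t) t0); case: lb {s_t0}.
Qed.
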